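(* Let $q=p^a$ with $p$ prime, let $G\le GL(V)=GL_d(q)$ be $p$-exceptional with $C_V(O^{p'}(G))=0$, let $t\in G$ have order $p$, and let $P$ be a Sylow $p$-subgroup of $G$. Then: (i) $d\le r_p\log_q|G:N_G(P)|$, where $r_p$ is the minimal number of $G$-conjugates of $P$ that generate $O^{p'}(G)$; (ii) $|V|\le |C_V(t)|\cdot|t^G|$; (iii) if $O^{p'}(G)$ is generated by $\alpha$ conjugates of $t$, then $q^{d/\alpha}\le|t^G|$.
   Context: $G\le GL_d(q)$ is $p$-exceptional if $p$ divides $|G|$ and every orbit of $G$ on $V=\mathbb{F}_q^d$ has size coprime to $p$. $O^{p'}(G)$ is the subgroup generated by all $p$-elements of $G$. $C_V(X)$ is the subspace of vectors fixed by all elements of $X$; $t^G$ is the conjugacy class of $t$ in $G$. *)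

From HB Require Import structures.
From mathcomp Require Import all_boot all_order all_algebra all_fingroup all_solvable all_field all_character.
Set Implicit Arguments. Unset Strict Implicit. Unset Printing Implicit Defensive.
Import GRing.Theory.
Local Open Scope group_scope.

(* G <= GL_n(F) is modelled by a faithful matrix representation rG of an
   abstract finite group G over the finite field F; V = 'rV[F]_n, with
   g acting on row vectors by v |-> v *m rG g. *)

Section Defs.
Variables (F : finFieldType) (gT : finGroupType) (G : {group gT}) (n : nat).
Variable rG : mx_representation F G n.

Definition vorbit (v : 'rV[F]_n) : {set 'rV[F]_n} :=
  [set (v *m rG g)%R | g in G].

Definition p_exceptional (p : nat) : Prop :=
  p %| #|G| /\ forall v : 'rV[F]_n, coprime #|vorbit v| p.

Definition fixV (X : {set gT}) : {set 'rV[F]_n} :=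
  [set v : 'rV[F]_n | [forall x in X, (v *m rG x)%R == v]].
End Defs.

Definition Opp (gT : finGroupType) (p : nat) (G : {set gT}) : {group gT} :=
  <<[set x in G | p.-elt x]>>%G.

Definition gen_by_conj_groups (gT : finGroupType) (G P H : {set gT}) (r : nat) : bool :=
  [exists s : {ffun 'I_r -> gT},
     [forall i, s i \in G] && (<<\bigcup_(i < r) (P :^ s i)>> == H)].

Definition gen_by_conj_elts (gT : finGroupType) (G H : {set gT}) (t : gT) (r : nat) : bool :=
  [exists s : {ffun 'I_r -> gT},
     [forall i, s i \in G] && (<<[set t ^ s i | i : 'I_r]>> == H)].

From HB Require Import structures.
From mathcomp Require Import all_boot all_order all_algebra all_fingroup all_solvable all_field all_character.
From mathcomp Require Import zify.
Set Implicit Arguments. Unset Strict Implicit. Unset Printing Implicit Defensive.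
Import GRing.Theory.
Local Open Scope group_scope.

(* Proof of Lemma 2.4.  Write q = |F| and let A be a subset of G (a Sylow
   p-subgroup P, or the singleton {t}).  The argument has two halves.
   - Covering: in a p-exceptional group every vector v has a stabiliser of
     p'-index, which therefore contains a Sylow p-subgroup; hence v is fixed
     by a conjugate of P, and so also by a conjugate of any p-subgroup.  Thus
     V is the union of the C_V(A^g), g in G, whence |V| <= |A^G| |C_V(A)|.
     For A = {t} this is (ii); in general it reads q^(d-c) <= |A^G| with
     c = dim C_V(A).
   - Generation: if r conjugates of A generate a group containing O^p'(G),
     their fixed spaces intersect in C_V(O^p'(G)) = 0, so by the dimension
     formula d <= r (d - c).
   Combining both, q^d <= q^(r (d - c)) <= |A^G|^r, which gives (i) with
   A = P (|P^G| = |G : N_G(P)|) and (iii) with A = {t} (|{t}^G| = |t^G|). *)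

Lemma card_bigcup_le (T I : finType) (A : {pred I}) (B : I -> {set T}) :
  (#|\bigcup_(i in A) B i| <= \sum_(i in A) #|B i|)%N.
Proof.
elim/big_rec2: _ => [|i k S _ IH]; first by rewrite cards0.
exact: leq_trans (leq_card_setU _ _) (leq_add _ IH).
Qed.

Lemma exp_bound_from_cover q d c N r : (0 < q)%N -> (c <= d)%N ->
  (q ^ d <= N * q ^ c)%N -> (d <= r * (d - c))%N -> (q ^ d <= N ^ r)%N.
Proof.
move=> q_gt0 le_cd cover_ineq gen_ineq.
have codim_ineq : (q ^ (d - c) <= N)%N.
  by move: cover_ineq; rewrite -{1}(subnK le_cd) expnD leq_pmul2r ?expn_gt0 ?q_gt0.
apply: leq_trans (leq_pexp2l q_gt0 gen_ineq) _.
rewrite mulnC expnM; case: r {gen_ineq} => [|r] //.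
by rewrite leq_exp2r.
Qed.

Lemma rank_bigcap_ge (F : fieldType) d r (A : 'I_r -> 'M[F]_d) :
  (d <= \rank (\bigcap_(i < r) A i)%MS + \sum_(i < r) (d - \rank (A i)))%N.
Proof.
elim: r A => [|r IH] A; first by rewrite !big_ord0 mxrank1 addn0.
rewrite !big_ord_recr /=.
set B := (\bigcap_(i < r) A (widen_ord (leqnSn r) i))%MS.
have /= IHB := IH (fun i => A (widen_ord (leqnSn r) i)); rewrite -/B in IHB.
have sum_cap := mxrank_sum_cap B (A ord_max).
have rk_sum : (\rank (B + A ord_max)%MS <= d)%N by apply: rank_leq_col.
have rk_last : (\rank (A ord_max) <= d)%N by apply: rank_leq_col.
lia.
Qed.

Lemma Sylow_of_p'index (gT : finGroupType) p (G S Q : {group gT}) :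
  prime p -> S \subset G -> coprime #|G : S| p -> p.-Sylow(S) Q ->
  p.-Sylow(G) Q.
Proof.
move=> p_pr sSG p'iS sylQ.
rewrite pHallE (subset_trans (pHall_sub sylQ) sSG) (card_Hall sylQ) /=.
rewrite -(Lagrange sSG) partnM ?cardG_gt0 ?indexg_gt0 //.
rewrite (@part_p'nat _ #|G : S|) ?muln1 //.
by rewrite p'natE // -prime_coprime // coprime_sym.
Qed.

Section FixedSpaces.
Variables (F : finFieldType) (gT : finGroupType) (G : {group gT}) (d : nat).
Variable rG : mx_representation F G d.

Lemma fixV_rowg (X : {set gT}) : fixV rG X = rowg (rfix_mx rG X).
Proof.
apply/setP=> v; rewrite !inE; apply/forallP/rfix_mxP => fixv x.
  by move=> Xx; have := fixv x; rewrite Xx => /eqP.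
by apply/implyP=> Xx; rewrite fixv.
Qed.

Lemma card_fixV (X : {set gT}) : #|fixV rG X| = (#|F| ^ \rank (rfix_mx rG X))%N.
Proof. by rewrite fixV_rowg card_rowg. Qed.

Lemma fixVS (X Y : {set gT}) : X \subset Y -> fixV rG Y \subset fixV rG X.
Proof.
move=> sXY; apply/subsetP=> v; rewrite !inE => /forall_inP fixY.
by apply/forall_inP=> x Xx; apply: fixY; apply: (subsetP sXY).
Qed.

(* Conjugating the operators moves C_V(X) by an invertible map. *)
Lemma rank_fix_conj (X : {set gT}) g : g \in G -> X \subset G ->
  \rank (rfix_mx rG (X :^ g)) = \rank (rfix_mx rG X).
Proof.
by move=> Gg sXG; rewrite (rfix_mx_conjsg rG Gg sXG) mxrankMfree // repr_mx_free.
Qed.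

Lemma rank_fix_eq0 (X : {set gT}) : fixV rG X = [set 0%R] ->
  \rank (rfix_mx rG X) = 0%N.
Proof.
have q_gt1 : (1 < #|F|)%N.
  by apply/card_gt1P; exists 0%R, 1%R; rewrite ?inE // eq_sym oner_eq0.
move/(congr1 (fun S : {set _} => #|S|)); rewrite card_fixV cards1 -(expn0 #|F|).
by move/eqP; rewrite eqn_exp2l // => /eqP.
Qed.

Definition conj_fix_cover (A : {set gT}) : Prop :=
  forall v : 'rV[F]_d, exists2 g, g \in G & v \in fixV rG (A :^ g).

(* Covering step: the fixed spaces of the conjugates of A all have the same
   size, so |V| <= |A^G| |C_V(A)|. *)
Lemma card_rV_le_cover (A : {set gT}) : A \subset G -> conj_fix_cover A ->
  (#|[set: 'rV[F]_d]| <= #|A :^: G| * #|fixV rG A|)%N.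
Proof.
move=> sAG coverA.
have sub : [set: 'rV[F]_d] \subset \bigcup_(B in A :^: G) fixV rG B.
  apply/subsetP=> v _; have [g Gg fixv] := coverA v.
  by apply/bigcupP; exists (A :^ g) => //; apply/imsetP; exists g.
apply: leq_trans (subset_leq_card sub) _.
apply: leq_trans (card_bigcup_le _ _) _.
rewrite (eq_bigr (fun _ => #|fixV rG A|)); first by rewrite sum_nat_const mulnC.
by move=> _ /imsetP[g Gg ->]; rewrite !card_fixV rank_fix_conj.
Qed.

Lemma dim_le_conj_gen (H A : {set gT}) r (s : 'I_r -> gT) :
  H \subset G -> fixV rG H = [set 0%R] -> A \subset G -> (forall i, s i \in G) ->
  H \subset <<\bigcup_(i < r) A :^ s i>> ->
  (d <= r * (d - \rank (rfix_mx rG A)))%N.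
Proof.
move=> sHG fixH0 sAG Gs sHgen.
set W := (\bigcap_(i < r) rfix_mx rG (A :^ s i))%MS.
have sAsG i : A :^ s i \subset G by rewrite conj_subG.
have stabW : H \subset rstab rG W.
  apply: subset_trans sHgen _; rewrite gen_subG.
  apply/bigcupsP=> i _; rewrite rfix_mx_rstabC //.
  exact: bigcapmx_inf (submx_refl _).
have W0 : \rank W = 0%N.
  apply/eqP; rewrite -leqn0 -(rank_fix_eq0 fixH0).
  by apply: mxrankS; rewrite -rfix_mx_rstabC.
have := rank_bigcap_ge (fun i => rfix_mx rG (A :^ s i)).
rewrite -/W W0 add0n (eq_bigr (fun _ => d - \rank (rfix_mx rG A)))%N.
  by rewrite sum_nat_const card_ord.
by move=> i _; rewrite rank_fix_conj.
Qed.

Lemma card_pow_le_conj_gen (H A : {set gT}) r (s : 'I_r -> gT) :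
  H \subset G -> fixV rG H = [set 0%R] -> A \subset G -> (forall i, s i \in G) ->
  H \subset <<\bigcup_(i < r) A :^ s i>> -> conj_fix_cover A ->
  (#|F| ^ d <= #|A :^: G| ^ r)%N.
Proof.
move=> sHG fixH0 sAG Gs sHgen coverA.
have q_gt0 : (0 < #|F|)%N by apply/card_gt0P; exists 0%R.
have cover_ineq := card_rV_le_cover sAG coverA.
rewrite cardsT card_mx mul1n card_fixV in cover_ineq.
apply: exp_bound_from_cover q_gt0 (rank_leq_col _) cover_ineq _.
exact: dim_le_conj_gen sHgen.
Qed.

Variable p : nat.
Hypotheses (p_pr : prime p) (pexc : p_exceptional rG p).

(* Every vector is fixed by a conjugate of any given Sylow p-subgroup: its
   stabiliser has p'-index since orbits have p'-length. *)
Lemma Sylow_fix_cover (P : {group gT}) : p.-Sylow(G) P -> conj_fix_cover P.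
Proof.
move=> sylP v; have [_ p'orbits] := pexc.
have orbit_v : vorbit rG v = orbit ('MR rG)%act G v.
  by apply: eq_in_imset => g Gg /=; rewrite mx_repr_actE.
pose S := 'C_G[v | 'MR rG].
have p'iS : coprime #|G : S| p by rewrite -card_orbit_in // -orbit_v.
have [Q sylQS] := Sylow_exists p [group of S].
have sylQ := Sylow_of_p'index p_pr (subsetIl _ _) p'iS sylQS.
have [g Gg defQ] := Sylow_trans sylP sylQ.
exists g => //; rewrite inE; apply/forall_inP=> y Py.
have : y \in S by rewrite (subsetP (pHall_sub sylQS)) // defQ.
rewrite !inE => /andP[Gy /andP[_ /subsetP/(_ v (set11 v))]].
by rewrite inE /= mx_repr_actE.
Qed.

Lemma pgroup_fix_cover (P X : {group gT}) : p.-Sylow(G) P ->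
  X \subset G -> p.-group X -> conj_fix_cover X.
Proof.
move=> sylP sXG pX v; have [g Gg fixv] := Sylow_fix_cover sylP v.
have [y Gy sXyP] := Sylow_Jsub sylP sXG pX.
exists (y * g); first by rewrite groupM.
by apply: subsetP fixv; apply: fixVS; rewrite conjsgM conjSg.
Qed.

Lemma p_elt_fix_cover (P : {group gT}) t : p.-Sylow(G) P ->
  t \in G -> p.-elt t -> conj_fix_cover [set t].
Proof.
move=> sylP Gt pt v.
have [|g Gg fixv] := pgroup_fix_cover sylP _ pt v; first by rewrite cycle_subG.
by exists g => //; apply: subsetP fixv; apply: fixVS; rewrite conjSg sub1set cycle_id.
Qed.

End FixedSpaces.

Lemma Opp_sub (gT : finGroupType) p (G : {group gT}) : Opp p G \subset G.
Proof. by rewrite gen_subG; apply/subsetP=> x /setIdP[]. Qed.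

Lemma card_conj_set1 (gT : finGroupType) (G : {group gT}) (t : gT) :
  #|[set t] :^: G| = #|t ^: G|.
Proof. by rewrite card_conjugates index_cent1. Qed.

Lemma bigcup_conj_set1 (gT : finGroupType) (t : gT) r (s : 'I_r -> gT) :
  \bigcup_(i < r) [set t] :^ s i = [set t ^ s i | i : 'I_r].
Proof.
apply/setP=> x; apply/bigcupP/imsetP=> [[i _]|[i _ ->]].
  by rewrite conjg_set1 inE => /eqP ->; exists i.
by exists i; rewrite // conjg_set1 set11.
Qed.

Unset Implicit Arguments.
Set Strict Implicit.

Theorem lemma2p4 (F : finFieldType) (p : nat) (gT : finGroupType)
    (G : {group gT}) (d : nat) (rG : mx_representation F G d)
    (t : gT) (P : {group gT}) :
  prime p -> (p \in [pchar F])%R ->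
  mx_faithful rG ->
  p_exceptional rG p ->
  fixV rG (Opp p G) = [set 0%R] ->
  t \in G -> #[t] = p ->
  P \in 'Syl_p(G) ->
  (forall r : nat,
      gen_by_conj_groups G P (Opp p G) r ->
      (forall r', gen_by_conj_groups G P (Opp p G) r' -> r <= r')%N ->
      (#|F| ^ d <= #|G : 'N_G(P)| ^ r)%N)
  /\ (#|[set: 'rV[F]_d]| <= #|fixV rG [set t]| * #|t ^: G|)%N
  /\ (forall alpha : nat, gen_by_conj_elts G (Opp p G) t alpha ->
        (#|F| ^ d <= #|t ^: G| ^ alpha)%N).
Proof.
move=> p_pr _ _ pexc fixO0 Gt ot; rewrite inE => sylP.
have pt : p.-elt t by rewrite /p_elt ot pnat_id.
have cover_t := p_elt_fix_cover p_pr pexc sylP Gt pt.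
have sPG := pHall_sub sylP; have sOG := Opp_sub p G.
have sTG : [set t] \subset G by rewrite sub1set.
split; [|split].
- move=> r /existsP[s /andP[/forallP Gs /eqP genO]] _.
  rewrite -card_conjugates.
  apply: card_pow_le_conj_gen sOG fixO0 sPG Gs _ (Sylow_fix_cover p_pr pexc sylP).
  by rewrite genO.
- by rewrite mulnC -card_conj_set1 card_rV_le_cover.
- move=> alpha /existsP[s /andP[/forallP Gs /eqP genO]].
  rewrite -card_conj_set1.
  apply: card_pow_le_conj_gen sOG fixO0 sTG Gs _ cover_t.
  by rewrite bigcup_conj_set1 genO.
Qed.
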